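(* Let $\mathcal{M}$ be a finite $\mathcal{R}$-trivial monoid with $n=\#\mathcal{M}$, with elements ordered so that $\#\sigma_1\mathcal{M}\ge\dots\ge\#\sigma_n\mathcal{M}$ (so all elements of $\mathcal{U}^{\mathbb{Z}}_{\mathcal{M}}$ are upper triangular). Then: (1) Every idempotent element of $\mathcal{U}^{\mathbb{Z}}_{\mathcal{M}}$ has only entries $0$ and $1$ on its diagonal. (2) If $E\in\mathcal{U}^{\mathbb{Z}}_{\mathcal{M}}$ is idempotent and $\mathcal{D}_E$ is a single equivalence class of the loop-type relation $\sim$, then $E$ is primitive in $\mathcal{U}^{\mathbb{Z}}_{\mathcal{M}}$: whenever $E=X+Y$ with $X,Y\in\mathcal{U}^{\mathbb{Z}}_{\mathcal{M}}$, $X^2=X$, $Y^2=Y$, $XY=YX=0$, then $X=0$ or $Y=0$. (3) If $U\in\mathcal{U}^{\mathbb{Z}}_{\mathcal{M}}$ has only entries $0$ and $1$ on its diagonal, and $a,b\in\mathbb{Z}_{\ge0}$ satisfy $a\ge n-d_U$ and $b\ge d_U$, then $\mathcal{P}_{a,b}(U)=\mathrm{Id}-(\mathrm{Id}-U^a)^b$ is idempotent and has the same diagonal as $U$.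
   Context: $\mathcal{M}$ is $\mathcal{R}$-trivial: $\sigma\mathcal{M}=\tau\mathcal{M}$ implies $\sigma=\tau$. Matrices in $\mathrm{Mat}(\mathbb{Z},n)$ are indexed by elements of $\mathcal{M}$ according to the chosen ordering. $U_\sigma$ is the matrix with $(U_\sigma)_{\tau,\kappa}=1$ if $\tau\sigma=\kappa$ and $0$ otherwise; $\mathcal{U}^{\mathbb{Z}}_{\mathcal{M}}:=\{\sum_{\mu\in\mathcal{M}} r_\mu U_\mu : r_\mu\in\mathbb{Z}\}\subset\mathrm{Mat}(\mathbb{Z},n)$ (a subring isomorphic to the monoid ring $\mathbb{Z}\mathcal{M}$ via $\mu\mapsto U_\mu$). For $U\in\mathcal{U}^{\mathbb{Z}}_{\mathcal{M}}$: $\mathcal{D}_U:=\{\sigma\in\mathcal{M}: U_{\sigma,\sigma}=1\}$ and $d_U:=\#\mathcal{D}_U$. $\mathcal{L}_\sigma:=\{\tau:\sigma\tau=\sigma\}$, and $\sigma\sim\kappa$ (same loop-type) iff $\mathcal{L}_\sigma=\mathcal{L}_\kappa$. $\mathcal{P}_{a,b}(U):=\mathrm{Id}-(\mathrm{Id}-U^a)^b$ for $a,b\in\mathbb{Z}_{\ge 0}$. *)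

From HB Require Import structures.
From mathcomp Require Import all_boot all_order all_algebra.
Set Implicit Arguments. Unset Strict Implicit. Unset Printing Implicit Defensive.
Import Order.TTheory GRing.Theory Num.Theory.
Local Open Scope ring_scope.

Section MonoidMatrices.
Variables (T : finType) (mul : T -> T -> T).

Definition rideal (s : T) : {set T} := [set mul s x | x : T].

Definition Lset (s : T) : {set T} := [set t | mul s t == s].

Variables (n : nat) (e : 'I_n -> T).

Definition Umat (s : T) : 'M[int]_n :=
  \matrix_(i < n, j < n) (if mul (e i) s == e j then 1 else 0).

Definition inUZ (A : 'M[int]_n) : Prop :=
  exists r : T -> int, A = \sum_(m : T) r m *: Umat m.

Definition Dset (A : 'M[int]_n) : {set T} :=
  [set s : T | [exists i : 'I_n, (e i == s) && (A i i == 1)]].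

Definition dU (A : 'M[int]_n) : nat := #|Dset A|.

Definition Pab (a b : nat) (A : 'M[int]_n) : 'M[int]_n :=
  1%:M - (1%:M - A ^+ a) ^+ b.

End MonoidMatrices.

From HB Require Import structures.
From mathcomp Require Import all_boot all_order all_algebra.
From mathcomp Require Import zify ring.
Set Implicit Arguments. Unset Strict Implicit. Unset Printing Implicit Defensive.
Import Order.TTheory GRing.Theory Num.Theory.
Local Open Scope ring_scope.

(* With rows ordered by decreasing size of principal right ideals,
   every element of U^Z_M is upper triangular (R-triviality forbids entries
   below the diagonal), and its diagonal entry at sigma only depends on the
   loop set L_sigma.  Everything else is linear algebra of upper triangular
   matrices over a commutative ring:
   - an upper triangular U with diagonal in {0,1} has characteristic
     polynomial X^(n - d) (X - 1)^d, d the number of diagonal ones, so by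
     Cayley-Hamilton  U^(n - d) (U - 1)^d = 0;
   - hence an idempotent with zero diagonal vanishes, and the polynomial
     Q = (1 - X^a)^b satisfies Q^2 - Q = X^(n-d) (X - 1)^d * k whenever
     a >= n - d and b >= d, which makes P_{a,b}(U) = 1 - Q(U) idempotent;
   - idempotents over a domain have diagonal entries x with x^2 = x. *)

Section UpperTriangular.
Variables (R : pzRingType) (n : nat).
Implicit Types A B : 'M[R]_n.

Definition upper_trig A := forall i j : 'I_n, (j < i)%N -> A i j = 0.

Definition diag01 A := forall i, A i i = 0 \/ A i i = 1.

Definition diag_ones A : {set 'I_n} := [set i | A i i == 1].

Lemma upper_trig1 : upper_trig 1%:M.
Proof. by move=> i j lt_ji; rewrite mxE -val_eqE eq_sym /= (ltn_eqF lt_ji). Qed.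

Lemma upper_trigB A B : upper_trig A -> upper_trig B -> upper_trig (A - B).
Proof. by move=> tA tB i j lt_ji; rewrite !mxE tA // tB // subrr. Qed.

Lemma upper_trigM A B : upper_trig A -> upper_trig B -> upper_trig (A *m B).
Proof.
move=> tA tB i j lt_ji; rewrite mxE big1 // => k _.
have [lt_ki | le_ik] := ltnP k i; first by rewrite tA ?mul0r.
by rewrite tB ?mulr0 // (leq_trans lt_ji).
Qed.

Lemma upper_trigX A k : upper_trig A -> upper_trig (A ^+ k).
Proof.
move=> tA; elim: k => [|k IH]; first exact: upper_trig1.
by rewrite exprS -mulmxE; apply: upper_trigM.
Qed.

Lemma diag_upper_trigM A B i : upper_trig A -> upper_trig B ->
  (A *m B) i i = A i i * B i i.
Proof.
move=> tA tB; rewrite mxE (bigD1 i) //= big1 ?addr0 // => k neq_ki.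
have [lt_ki | lt_ik | /val_inj eq_ki] := ltngtP k i.
- by rewrite tA ?mul0r.
- by rewrite tB ?mulr0.
- by rewrite eq_ki eqxx in neq_ki.
Qed.

Lemma diag_upper_trigX A k i : upper_trig A -> (A ^+ k) i i = A i i ^+ k.
Proof.
move=> tA; elim: k => [|k IH]; first by rewrite !expr0 mxE eqxx.
by rewrite !exprS -mulmxE diag_upper_trigM ?IH //; apply: upper_trigX.
Qed.

End UpperTriangular.

(* The characteristic polynomial of an upper triangular matrix is the
   product of the X - A_ii (transpose and use the lower triangular case). *)
Lemma char_poly_upper_trig (R : comNzRingType) n (A : 'M[R]_n) : upper_trig A ->
  char_poly A = \prod_(i < n) ('X - (A i i)%:P).
Proof.
move=> tA; have -> : char_poly A = char_poly A^T.
  rewrite /char_poly -det_tr; congr (\det _).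
  by apply/matrixP => i j; rewrite !mxE eq_sym.
rewrite char_poly_trig; first by apply: eq_bigr => i _; rewrite mxE.
by apply/is_trig_mxP => i j lt_ij; rewrite mxE tA.
Qed.

(* Cayley-Hamilton for a 0/1 diagonal: with d the number of diagonal ones,
   U^(n - d) (U - 1)^d = 0. *)
Lemma upper_trig01_annihilator (R : comNzRingType) n (U : 'M[R]_n) :
  upper_trig U -> diag01 U ->
  U ^+ (n - #|diag_ones U|) * (U - 1) ^+ #|diag_ones U| = 0.
Proof.
case: n U => [|n] U tU U01; first by apply/matrixP => [[]].
have card_others : (n.+1 - #|diag_ones U|)%N = #|~: diag_ones U|.
  by have := cardsC (diag_ones U); rewrite card_ord; lia.
have := Cayley_Hamilton U.
rewrite char_poly_upper_trig // (bigID (mem (diag_ones U))) /=.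
rewrite (eq_bigr (fun=> 'X - 1)) => [|i]; last by rewrite inE => /eqP ->.
rewrite (eq_bigr (fun=> 'X)) => [|i]; last first.
  by rewrite inE; case: (U01 i) => ->; rewrite ?eqxx // subr0.
rewrite [\prod_(i | i \notin _) _](eq_bigl (mem (~: diag_ones U))) => [|i];
  last by rewrite !inE.
rewrite !prodr_const card_others mulrC rmorphM !rmorphXn rmorphB rmorph1.
by rewrite /= horner_mx_X.
Qed.

(* An upper triangular idempotent with zero diagonal is nilpotent by the
   previous lemma, hence zero. *)
Lemma idempotent_zero_diag (R : comNzRingType) n (W : 'M[R]_n) :
  upper_trig W -> (forall i, W i i = 0) -> W *m W = W -> W = 0.
Proof.
case: n W => [|n] W tW W0 WW; first by apply/matrixP => [[]].
have no_ones : diag_ones W = set0.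
  by apply/setP => i; rewrite !inE W0 eq_sym oner_eq0.
have := upper_trig01_annihilator tW (fun i => or_introl (W0 i)).
have powW k : W ^+ k.+1 = W.
  by elim: k => [|k IH]; rewrite ?expr1 // exprS IH -mulmxE.
by rewrite no_ones cards0 subn0 expr0 mulr1 powW.
Qed.

Lemma idempotent_diag01 (R : idomainType) n (E : 'M[R]_n) :
  upper_trig E -> E *m E = E -> diag01 E.
Proof.
move=> tE EE i; have := diag_upper_trigM i tE tE; rewrite EE => Eii.
have : E i i * (E i i - 1) = 0 by rewrite mulrBr mulr1 -Eii subrr.
by move/eqP; rewrite mulf_eq0 subr_eq0 => /orP [] /eqP; [left | right].
Qed.

(* Q = (1 - X^a)^b satisfies Q^2 - Q = Q (Q - 1), where (X - 1)^b divides Q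
   and X^a divides Q - 1; so X^z (X - 1)^o divides it for z <= a, o <= b. *)
Lemma idempotent_poly_factor (R : comNzRingType) (a b z o : nat) :
  (z <= a)%N -> (o <= b)%N ->
  exists k : {poly R}, let q := (1 - 'X ^+ a) ^+ b in
    q * q - q = 'X ^+ z * ('X - 1) ^+ o * k.
Proof.
move=> le_za le_ob.
set g := \sum_(i < a) ('X : {poly R}) ^+ i.
set s := \sum_(i < b) (1 - ('X : {poly R}) ^+ a) ^+ i.
exists (('X - 1) ^+ (b - o) * (- g) ^+ b * (- 'X ^+ (a - z)) * s) => q.
have q_factor : q = ('X - 1) ^+ b * (- g) ^+ b.
  by rewrite /q -exprMn mulrN -subrX1 opprB.
have q1_factor : q - 1 = - 'X ^+ a * s.
  by rewrite /q subrX1 addrAC subrr add0r.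
have Xa : 'X ^+ a = 'X ^+ z * 'X ^+ (a - z) :> {poly R}.
  by rewrite -exprD subnKC.
have Xb : ('X - 1) ^+ b = ('X - 1) ^+ o * ('X - 1) ^+ (b - o) :> {poly R}.
  by rewrite -exprD subnKC.
have -> : q * q - q = q * (q - 1) by rewrite mulrBr mulr1.
rewrite q1_factor q_factor Xa Xb; ring.
Qed.

(* Part (3), idempotence: evaluating the factorisation above at U kills
   Q(U)^2 - Q(U), so Q(U) and hence P_{a,b}(U) = 1 - Q(U) are idempotent. *)
Lemma power_idempotent (R : comNzRingType) n (U : 'M[R]_n) a b :
  upper_trig U -> diag01 U ->
  (n - #|diag_ones U| <= a)%N -> (#|diag_ones U| <= b)%N ->
  let P := 1%:M - (1%:M - U ^+ a) ^+ b in P *m P = P.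
Proof.
case: n U => [|n] U tU U01 le_a le_b P; first by apply/matrixP => [[]].
have [k factor] := idempotent_poly_factor R le_a le_b.
have := congr1 (horner_mx U) factor.
rewrite /= !(rmorphM, rmorphB, rmorphXn, rmorph1) /= horner_mx_X.
rewrite upper_trig01_annihilator // mul0r => /eqP; rewrite subr_eq0 => /eqP QQ.
by rewrite /P mulmxE idmxE mulrBl mul1r mulrBr mulr1 QQ subrr subr0.
Qed.

(* Part (3), diagonal: a diagonal 0 forces a > 0 and a diagonal 1 forces
   b > 0, and then (1 - (1 - x^a)^b) = x for x in {0,1}. *)
Lemma power_idempotent_diag (R : comNzRingType) n (U : 'M[R]_n) a b :
  upper_trig U -> diag01 U ->
  (n - #|diag_ones U| <= a)%N -> (#|diag_ones U| <= b)%N ->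
  let P := 1%:M - (1%:M - U ^+ a) ^+ b in forall i, P i i = U i i.
Proof.
move=> tU U01 le_a le_b P i.
have tV : upper_trig (1%:M - U ^+ a).
  by apply: upper_trigB; [apply: upper_trig1 | apply: upper_trigX].
rewrite /P !mxE diag_upper_trigX // !mxE eqxx diag_upper_trigX //=.
have card_ones : (#|diag_ones U| + #|~: diag_ones U| = n)%N.
  by rewrite cardsC card_ord.
case: (U01 i) => Uii; rewrite Uii.
- have others_pos : (0 < #|~: diag_ones U|)%N.
    by apply/card_gt0P; exists i; rewrite !inE Uii eq_sym oner_eq0.
  have a_gt0 : (0 < a)%N by lia.
  by rewrite expr0n eqn0Ngt a_gt0 subr0 expr1n subrr.
- have ones_pos : (0 < #|diag_ones U|)%N.
    by apply/card_gt0P; exists i; rewrite inE Uii.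
  have b_gt0 : (0 < b)%N by lia.
  by rewrite expr1n subrr expr0n eqn0Ngt b_gt0 subr0.
Qed.

Lemma rideal_mulr_sub (T : finType) (mul : T -> T -> T)
    (mulA : forall x y z, mul x (mul y z) = mul (mul x y) z) (s m : T) :
  rideal mul (mul s m) \subset rideal mul s.
Proof.
apply/subsetP => x /imsetP [y _ ->]; apply/imsetP.
by exists (mul m y); rewrite ?mulA.
Qed.

Section MonoidAlgebra.
Variables (T : finType) (mul : T -> T -> T) (n : nat) (e : 'I_n -> T).

Lemma inUZ_entry (A : 'M[int]_n) (r : T -> int) :
  A = \sum_(m : T) r m *: Umat mul e m ->
  forall i j, A i j = \sum_(m : T) r m * (if mul (e i) m == e j then 1 else 0).
Proof. by move=> -> i j; rewrite summxE; apply: eq_bigr => m _; rewrite !mxE. Qed.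

(* Diagonal entry (i, i) sums r_m over m in L_(e i); it depends only on the
   loop type of e i. *)
Lemma inUZ_diag_loop_type (A : 'M[int]_n) (i j : 'I_n) : inUZ mul e A ->
  Lset mul (e i) = Lset mul (e j) -> A i i = A j j.
Proof.
move=> [r defA] eqL; rewrite !(inUZ_entry defA); apply: eq_bigr => m _.
have inL k : (mul (e k) m == e k) = (m \in Lset mul (e k)) by rewrite inE.
by rewrite !inL eqL.
Qed.

Hypothesis e_bij : bijective e.

Lemma dU_diag_ones (A : 'M[int]_n) : dU e A = #|diag_ones A|.
Proof.
rewrite /dU -(card_imset _ (bij_inj e_bij)); apply: eq_card => s.
rewrite inE; apply/existsP/imsetP => [[i /andP [/eqP <- /eqP Aii]] | [i]].
  by exists i; rewrite // inE Aii.
by rewrite inE => /eqP Aii ->; exists i; rewrite eqxx Aii.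
Qed.

Hypothesis mulA : forall x y z, mul x (mul y z) = mul (mul x y) z.
Hypothesis Rtriv : forall s t, rideal mul s = rideal mul t -> s = t.
Hypothesis e_ord : forall i j : 'I_n, (i <= j)%N ->
  (#|rideal mul (e j)| <= #|rideal mul (e i)|)%N.

(* Elements of U^Z_M are upper triangular: an entry e_i m = e_j with j < i
   gives e_j M <= e_i M, the ordering forces equality, and R-triviality
   then gives i = j. *)
Lemma inUZ_upper_trig (A : 'M[int]_n) : inUZ mul e A -> upper_trig A.
Proof.
move=> [r defA] i j lt_ji; rewrite (inUZ_entry defA) big1 // => m _.
case: eqP => [eij | _]; last by rewrite mulr0.
have sub : rideal mul (e j) \subset rideal mul (e i).
  by rewrite -eij rideal_mulr_sub.
have : rideal mul (e j) == rideal mul (e i).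
  by rewrite eqEcard sub e_ord // ltnW.
move=> /eqP /Rtriv /(bij_inj e_bij) eq_ji.
by rewrite eq_ji ltnn in lt_ji.
Qed.

Lemma inUZ_idempotent_diag01 (E : 'M[int]_n) :
  inUZ mul e E -> E *m E = E -> forall i, E i i = 0 \/ E i i = 1.
Proof. by move=> /inUZ_upper_trig; apply: idempotent_diag01. Qed.

(* If X has a diagonal 1 at i and Y one at j, both i and j lie in
   D_E, so e i ~ e j and X_ii = X_jj, contradicting X_jj = 0 (forced by
   E_jj = X_jj + 1 <= 1).  So X or Y has zero diagonal and vanishes. *)
Lemma inUZ_primitive (E X Y : 'M[int]_n) (s : T) :
  inUZ mul e E -> inUZ mul e X -> inUZ mul e Y ->
  E *m E = E -> X *m X = X -> Y *m Y = Y -> E = X + Y ->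
  Dset e E = [set k | Lset mul k == Lset mul s] -> X = 0 \/ Y = 0.
Proof.
move=> E_UZ X_UZ Y_UZ EE XX YY defE defD.
have E01 := inUZ_idempotent_diag01 E_UZ EE.
have X01 := inUZ_idempotent_diag01 X_UZ XX.
have Y01 := inUZ_idempotent_diag01 Y_UZ YY.
have sumE i : E i i = X i i + Y i i by rewrite defE mxE.
have loop_of_one i : E i i = 1 -> Lset mul (e i) = Lset mul s.
  move=> Eii; have : e i \in Dset e E.
    by rewrite inE; apply/existsP; exists i; rewrite eqxx Eii.
  by rewrite defD inE => /eqP.
case: (boolP [forall i, X i i == 0]) => [/forallP X0 | /forallPn [i Xi]].
  left; apply: idempotent_zero_diag (inUZ_upper_trig X_UZ) _ XX.
  by move=> i; apply/eqP/X0.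
right; apply: idempotent_zero_diag (inUZ_upper_trig Y_UZ) _ YY => j.
have Xi1 : X i i = 1 by case: (X01 i) => // Xi0; rewrite Xi0 eqxx in Xi.
have Ei1 : E i i = 1 by move: (E01 i) (Y01 i) (sumE i); lia.
case: (Y01 j) => // Yj1.
have [Ej1 Xj0] : E j j = 1 /\ X j j = 0 by move: (E01 j) (X01 j) (sumE j); lia.
have same_type : Lset mul (e i) = Lset mul (e j).
  by rewrite (loop_of_one i Ei1) (loop_of_one j Ej1).
by have := inUZ_diag_loop_type X_UZ same_type; rewrite Xi1 Xj0.
Qed.

End MonoidAlgebra.

Theorem mainTheorem6
  (T : finType) (mul : T -> T -> T) (one : T)
  (mulA : forall x y z, mul x (mul y z) = mul (mul x y) z)
  (mul1x : forall x, mul one x = x)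
  (mulx1 : forall x, mul x one = x)
  (Rtriv : forall s t, rideal mul s = rideal mul t -> s = t)
  (n : nat) (n_eq : n = #|T|)
  (e : 'I_n -> T) (e_bij : bijective e)
  (e_ord : forall i j : 'I_n, (i <= j)%N ->
             (#|rideal mul (e j)| <= #|rideal mul (e i)|)%N) :
  (* (1) *)
  (forall E : 'M[int]_n, inUZ mul e E -> E *m E = E ->
     forall i, E i i = 0 \/ E i i = 1) /\
  (* (2) *)
  (forall E : 'M[int]_n, inUZ mul e E -> E *m E = E ->
     (exists s : T, Dset e E = [set k : T | Lset mul k == Lset mul s]) ->
     forall X Y : 'M[int]_n, inUZ mul e X -> inUZ mul e Y ->
       E = X + Y -> X *m X = X -> Y *m Y = Y -> X *m Y = 0 -> Y *m X = 0 ->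
       X = 0 \/ Y = 0) /\
  (* (3) *)
  (forall U : 'M[int]_n, inUZ mul e U ->
     (forall i, U i i = 0 \/ U i i = 1) ->
     forall a b : nat, (n - dU e U <= a)%N -> (dU e U <= b)%N ->
       Pab a b U *m Pab a b U = Pab a b U /\
       (forall i, Pab a b U i i = U i i)).
Proof.
split; first exact: (inUZ_idempotent_diag01 e_bij mulA Rtriv e_ord).
split.
  move=> E E_UZ EE [s defD] X Y X_UZ Y_UZ defE XX YY _ _.
  exact: (inUZ_primitive e_bij mulA Rtriv e_ord
           E_UZ X_UZ Y_UZ EE XX YY defE defD).
move=> U U_UZ U01 a b; rewrite dU_diag_ones // => le_a le_b.
have U_trig := inUZ_upper_trig e_bij mulA Rtriv e_ord U_UZ.
split; [exact: power_idempotent U_trig U01 le_a le_b |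
        exact: power_idempotent_diag U_trig U01 le_a le_b].
Qed.
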